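(* Let $R=\mathbb{Z}[i,\tfrac{1}{\sqrt{2}}]$. For all $m,n\in\mathbb{N}$, a complex $2^{m}\times 2^{n}$ matrix $M$ is the standard interpretation $\llbracket D\rrbracket$ of some diagram $D:n\to m$ of the $\frac{\pi}{4}$-fragment ZX-calculus if and only if every entry of $M$ lies in $R$. That is, the $\frac{\pi}{4}$-fragment ZX-calculus corresponds exactly to the matrices over $R$.
   Context: The $\frac{\pi}{4}$-fragment ZX-calculus is built as follows. Its diagrams $D:k\to l$ ($k$ inputs, $l$ outputs) are generated from the generators below, using sequential composition $\circ$ and parallel composition (tensor) $\otimes$. The generators and their standard interpretations $\llbracket\cdot\rrbracket$ as complex matrices are: - the green spider $R_Z^{(n,m)}:n\to m$ for any $n,m\in\mathbb{N}$, with $\llbracket R_Z^{(n,m)}\rrbracket=|0\rangle^{\otimes m}\langle 0|^{\otimes n}+|1\rangle^{\otimes m}\langle 1|^{\otimes n}$; - the green phase $A_\alpha:1\to1$ for $\alpha\in\{\frac{k\pi}{4}: k=0,\dots,7\}$, with $\llbracket A_\alpha\rrbracket=|0\rangle\langle0|+e^{i\alpha}|1\rangle\langle1|$; - the Hadamard gate $H:1\to1$, with $\llbracket H\rrbracket=\frac{1}{\sqrt2}\begin{pmatrix}1&1\\1&-1\end{pmatrix}$; - the swap $\sigma:2\to2$, with $\llbracket\sigma\rrbracket=\sum_{a,b\in\{0,1\}}|ba\rangle\langle ab|$; - the identity wire $\mathbb{I}:1\to1$, interpreted as the $2\times2$ identity; - the empty diagram $e:0\to0$, interpreted as the scalar $1$;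 - the cap $C_a:0\to2$, with $\llbracket C_a\rrbracket=|00\rangle+|11\rangle$; - the cup $C_u:2\to0$, with $\llbracket C_u\rrbracket=\langle00|+\langle11|$. The interpretation is extended to all diagrams by $\llbracket D_1\circ D_2\rrbracket=\llbracket D_1\rrbracket\llbracket D_2\rrbracket$ (matrix product) and $\llbracket D_1\otimes D_2\rrbracket=\llbracket D_1\rrbracket\otimes\llbracket D_2\rrbracket$ (Kronecker product). A diagram $n\to m$ is thus interpreted as a $2^m\times 2^n$ matrix. *)

(* Complex numbers are modelled by an arbitrary
   numClosedFieldType C (e.g. algC, or complex R over a realType R). *)
From HB Require Import structures.
From mathcomp Require Import all_boot all_order all_algebra.
From mathcomp Require Import mxtens.
Set Implicit Arguments. Unset Strict Implicit. Unset Printing Implicit Defensive.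
Import Order.TTheory GRing.Theory Num.Theory.
Local Open Scope ring_scope.

(* Diagrams D : n -> m (n inputs, m outputs) of the pi/4-fragment ZX-calculus. *)
Inductive diagram : nat -> nat -> Type :=
| ZSpider (n m : nat) : diagram n m
| ZPhase (k : 'I_8) : diagram 1 1
| Had : diagram 1 1
| Swap : diagram 2 2
| IdW : diagram 1 1
| Empty : diagram 0 0
| Cap : diagram 0 2
| Cup : diagram 2 0
| Comp (n k m : nat) : diagram k m -> diagram n k -> diagram n m
| Tens (n1 m1 n2 m2 : nat) :
      diagram n1 m1 -> diagram n2 m2 -> diagram (n1 + n2) (m1 + m2).

Section Interp.
Variable C : numClosedFieldType.

Definition omega8 : C := (1 + 'i) / sqrtC 2.

(* Kronecker product on qubit spaces: basis index of |b_1 ... b_m> is the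
   binary number b_1...b_m (b_1 most significant). *)
Definition kron (n1 m1 n2 m2 : nat)
  (A : 'M[C]_(2 ^ m1, 2 ^ n1)) (B : 'M[C]_(2 ^ m2, 2 ^ n2))
  : 'M[C]_(2 ^ (m1 + m2), 2 ^ (n1 + n2)) :=
  castmx (esym (expnD 2 m1 m2), esym (expnD 2 n1 n2)) (tensmx A B).

Fixpoint interp (n m : nat) (D : diagram n m) : 'M[C]_(2 ^ m, 2 ^ n) :=
  match D in diagram n m return 'M[C]_(2 ^ m, 2 ^ n) with
  | ZSpider n m => \matrix_(i, j)
       ((((i : nat) == 0%N) && ((j : nat) == 0%N))%:R
        + (((i : nat) == (2 ^ m).-1) && ((j : nat) == (2 ^ n).-1))%:R)
  | ZPhase k => \matrix_(i, j)
       (if (i : nat) == (j : nat) then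
          (if (i : nat) == 0%N then 1 else omega8 ^+ k) else 0)
  | Had => \matrix_(i, j) ((sqrtC 2)^-1 * (-1) ^+ ((i : nat) * (j : nat)))
  | Swap => \matrix_(i, j)
       (((i : nat) == 2 * ((j : nat) %% 2) + (j : nat) %/ 2)%N%:R)
  | IdW => 1%:M
  | Empty => 1%:M
  | Cap => \matrix_(i, j) ((((i : nat) == 0%N) || ((i : nat) == 3%N))%:R)
  | Cup => \matrix_(i, j) ((((j : nat) == 0%N) || ((j : nat) == 3%N))%:R)
  | Comp n k m D1 D2 => interp D1 *m interp D2
  | Tens n1 m1 n2 m2 D1 D2 => kron (interp D1) (interp D2)
  end.

Inductive in_Zi_isqrt2 : C -> Prop :=
| inR_one : in_Zi_isqrt2 1
| inR_i : in_Zi_isqrt2 'i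
| inR_isqrt2 : in_Zi_isqrt2 (sqrtC 2)^-1
| inR_add x y : in_Zi_isqrt2 x -> in_Zi_isqrt2 y -> in_Zi_isqrt2 (x + y)
| inR_opp x : in_Zi_isqrt2 x -> in_Zi_isqrt2 (- x)
| inR_mul x y : in_Zi_isqrt2 x -> in_Zi_isqrt2 y -> in_Zi_isqrt2 (x * y).

End Interp.

(* Soundness: every generator has its entries in R = Z[i, 1/sqrt 2], and R is
   closed under the sums and products that composition and tensor produce.

   Completeness: call D : 0 -> 1 a state of l when [[D]] = |0> + l |1>.  States
   of 1, i and 1/sqrt 2 exist, and states are closed under sum (an adder built
   from CCZ), negation (the phase pi) and product (the spider 2 -> 1), so every
   l in R has a state.  Feeding the state of l into the transpose of the
   classical map x |-> ([x = z], x) gives the diagonal matrix with l at z and 1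
   elsewhere; composing such diagonals yields diag(f) for any f with values in R,
   and finally M = (id_m (x) u^n) diag(vec M) (v^m (x) id_n), where v = |0> + |1>
   and u = <0| + <1|.  The finitely many concrete gadgets are checked by exact
   evaluation in Z[w, 1/2], w = e^(i pi/4). *)

From HB Require Import structures.
From Stdlib Require Import ZArith.
From mathcomp Require Import all_boot all_order all_algebra.
From mathcomp Require Import mxtens ssrZ ring.
Set Implicit Arguments. Unset Strict Implicit. Unset Printing Implicit Defensive.
Import GRing.Theory Num.Theory.
Local Open Scope ring_scope.

Section NatIndexed.
Variable R : pzRingType.

Definition entry p q (M : 'M[R]_(p, q)) (i j : nat) : R :=
  if insub i is Some i' then if insub j is Some j' then M i' j' else 0 else 0.

Lemma entry_ord p q (M : 'M[R]_(p, q)) (i : 'I_p) (j : 'I_q) : entry M i j = M i j.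
Proof. by rewrite /entry !valK. Qed.

Lemma entry_out p q (M : 'M[R]_(p, q)) i j :
  ~~ ((i < p) && (j < q))%N -> entry M i j = 0.
Proof.
rewrite /entry negb_and => /orP[/negbTE hi | /negbTE hj].
  by rewrite (insubF 'I_p hi).
by case: (insub i) => // ?; rewrite (insubF 'I_q hj).
Qed.

Lemma entry_mx p q (F : 'I_p -> 'I_q -> R) i j x :
    (forall (a : 'I_p) (b : 'I_q), a = i :> nat -> b = j :> nat -> F a b = x) ->
    (~~ ((i < p) && (j < q))%N -> x = 0) ->
  entry (\matrix_(a, b) F a b) i j = x.
Proof.
move=> Fx x0; have [/andP[hi hj] | out] := boolP ((i < p) && (j < q))%N.
  by rewrite (entry_ord _ (Ordinal hi) (Ordinal hj)) mxE; apply: Fx.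
by rewrite entry_out // x0.
Qed.

Lemma entry_scalar p (a : R) i j :
  entry (a%:M : 'M_p) i j = (((i < p) && (j < p)) && (i == j))%N%:R * a.
Proof.
have [/andP[hi hj] | out] := boolP ((i < p) && (j < p))%N; last first.
  by rewrite entry_out // mul0r.
by rewrite (entry_ord _ (Ordinal hi) (Ordinal hj)) mxE mulr_natl.
Qed.

Lemma entry_mul p q r (A : 'M[R]_(p, q)) (B : 'M[R]_(q, r)) i j :
  entry (A *m B) i j = \sum_(0 <= k < q) entry A i k * entry B k j.
Proof.
have [/andP[hi hj] | out] := boolP ((i < p) && (j < r))%N; last first.
  rewrite entry_out // big1 // => k _.
  case/nandP: out => [/negbTE hi | /negbTE hj].
    by rewrite (entry_out A) ?mul0r // hi.
  by rewrite (entry_out B) ?mulr0 // hj andbF.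
rewrite (entry_ord _ (Ordinal hi) (Ordinal hj)) mxE big_mkord; apply: eq_bigr => k _.
by rewrite -(entry_ord A (Ordinal hi)) -(entry_ord B _ (Ordinal hj)).
Qed.

Lemma sum_nat_mul (F : nat -> R) p d :
  \sum_(0 <= l < p * d) F l = \sum_(0 <= a < p) \sum_(0 <= b < d) F (a * d + b)%N.
Proof.
elim: p => [|p IH]; first by rewrite mul0n !big_geq.
rewrite big_nat_recr //= -IH mulSn addnC (@big_cat_nat _ _ _ (p * d)) ?leq_addr //=.
congr (_ + _); rewrite -{1}(add0n (p * d)%N) big_addn addKn.
by apply: eq_bigr => b _; rewrite addnC.
Qed.

Lemma sum_pow2_split (F : nat -> R) k1 k2 :
  \sum_(0 <= l < 2 ^ (k1 + k2)) F l =
  \sum_(0 <= a < 2 ^ k1) \sum_(0 <= b < 2 ^ k2) F (a * 2 ^ k2 + b)%N.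
Proof. by rewrite expnD sum_nat_mul. Qed.

Lemma sum_nat2 (F : nat -> R) : \sum_(0 <= b < 2) F b = F 0%N + F 1%N.
Proof. by rewrite big_nat_recr // big_nat1. Qed.

Lemma sum_nat_delta (F : nat -> R) N a :
  (a < N)%N -> \sum_(0 <= b < N) (b == a)%:R * F b = F a.
Proof.
move=> ha; rewrite (bigD1_seq a) ?mem_index_iota ?iota_uniq //= eqxx mul1r.
by rewrite big1 ?addr0 // => b /negbTE ->; rewrite mul0r.
Qed.

End NatIndexed.

Variant index_split_spec k : nat -> Type :=
  IndexSplit a b of (a < 2)%N & (b < 2 ^ k)%N : index_split_spec k (a * 2 ^ k + b).

Lemma index_splitP k x : (x < 2 ^ k.+1)%N -> index_split_spec k x.
Proof.
move=> hx; rewrite (divn_eq x (2 ^ k)); constructor.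
  by rewrite ltn_divLR ?expn_gt0 // -expnS.
by rewrite ltn_mod expn_gt0.
Qed.

Lemma index_pair_lt k1 k2 a b : (a < 2 ^ k1)%N -> (b < 2 ^ k2)%N ->
  (a * 2 ^ k2 + b < 2 ^ (k1 + k2))%N.
Proof.
move=> ha hb; rewrite expnD; apply: (@leq_trans (a.+1 * 2 ^ k2)).
  by rewrite mulSn [(2 ^ k2 + _)%N]addnC ltn_add2l.
by rewrite leq_mul2r ha orbT.
Qed.

Lemma index_assoc k a v r :
  (a * 2 ^ k.+1 + (v * 2 ^ k + r) = (a * 2 + v) * 2 ^ k + r)%N.
Proof. by rewrite expnS mulnA mulnDl addnA. Qed.

(* [DZW e c0 c1 c2 c3] stands for (c0 + c1 w + c2 w^2 + c3 w^3) / 2^e, where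
   w = e^(i pi/4). *)
Record dzw := DZW { dzw_exp : nat; dzw0 : Z; dzw1 : Z; dzw2 : Z; dzw3 : Z }.

Definition dzw_of_nat (k : nat) : dzw := DZW 0 k%:R 0 0 0.

Definition dzw_opp (x : dzw) : dzw :=
  DZW (dzw_exp x) (- dzw0 x) (- dzw1 x) (- dzw2 x) (- dzw3 x).

Definition dzw_shift (e : nat) (x : dzw) : dzw :=
  DZW (dzw_exp x + e) (dzw0 x * 2 ^+ e) (dzw1 x * 2 ^+ e) (dzw2 x * 2 ^+ e)
    (dzw3 x * 2 ^+ e).

Definition dzw_add (x y : dzw) : dzw :=
  let e := maxn (dzw_exp x) (dzw_exp y) in
  let x' := dzw_shift (e - dzw_exp x) x in let y' := dzw_shift (e - dzw_exp y) y in
  DZW e (dzw0 x' + dzw0 y') (dzw1 x' + dzw1 y') (dzw2 x' + dzw2 y') (dzw3 x' + dzw3 y').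

(* Product of polynomials in w, reduced modulo w^4 = -1. *)
Definition dzw_mul (x y : dzw) : dzw :=
  let: DZW k a0 a1 a2 a3 := x in let: DZW l b0 b1 b2 b3 := y in
  DZW (k + l)
    (a0 * b0 - a1 * b3 - a2 * b2 - a3 * b1)
    (a0 * b1 + a1 * b0 - a2 * b3 - a3 * b2)
    (a0 * b2 + a1 * b1 + a2 * b0 - a3 * b3)
    (a0 * b3 + a1 * b2 + a2 * b1 + a3 * b0).

Definition dzw_sum (s : seq dzw) : dzw := foldr dzw_add (dzw_of_nat 0) s.

Definition dzw_eqb (x y : dzw) : bool :=
  [&& dzw0 x * 2 ^+ dzw_exp y == dzw0 y * 2 ^+ dzw_exp x,
      dzw1 x * 2 ^+ dzw_exp y == dzw1 y * 2 ^+ dzw_exp x,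
      dzw2 x * 2 ^+ dzw_exp y == dzw2 y * 2 ^+ dzw_exp x &
      dzw3 x * 2 ^+ dzw_exp y == dzw3 y * 2 ^+ dzw_exp x].

Definition dzw_omega_pow (k : nat) : dzw := iter k (dzw_mul (DZW 0 0 1 0 0)) (dzw_of_nat 1).

(* 1/sqrt 2 = (w - w^3) / 2 *)
Definition dzw_isqrt2 : dzw := DZW 1 0 1 0 (-1).

Section DzwValue.
Variable C : numClosedFieldType.
Local Notation w := (omega8 C).
Local Notation zC z := ((int_of_Z z)%:~R : C).

Lemma omega8_sqr : w ^+ 2 = 'i.
Proof. by rewrite /omega8 expr_div_n sqrtCK sqrrD sqrCi expr1n mul1r; field. Qed.

Lemma omega8_pow4 : w ^+ 4 = -1.
Proof. by rewrite (exprM w 2 2) omega8_sqr sqrCi. Qed.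

Lemma omega8_sub_cube : w - w ^+ 3 = sqrtC 2.
Proof.
have s2_neq0 : sqrtC 2 != 0 :> C by rewrite sqrtC_eq0 pnatr_eq0.
rewrite exprS omega8_sqr /omega8.
transitivity ((1 - 'i ^+ 2) / sqrtC 2 : C); first by field.
by rewrite sqrCi opprK -[1 + 1]/(2%:R) -{1}(sqrtCK 2) expr2 mulfK.
Qed.

Definition dzw_num (x : dzw) : C :=
  zC (dzw0 x) + zC (dzw1 x) * w + zC (dzw2 x) * w ^+ 2 + zC (dzw3 x) * w ^+ 3.

Definition dzw_val (x : dzw) : C := dzw_num x / 2 ^+ dzw_exp x.

Lemma pow2_neq0 e : 2 ^+ e != 0 :> C.
Proof. by rewrite expf_neq0 // pnatr_eq0. Qed.

Lemma dzw_val_of_nat k : dzw_val (dzw_of_nat k) = k%:R.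
Proof. by rewrite /dzw_val /dzw_num /= !rmorph_nat !rmorph0 !mul0r !addr0 divr1. Qed.

Lemma dzw_val_opp x : dzw_val (dzw_opp x) = - dzw_val x.
Proof. by rewrite /dzw_val /dzw_num /= !rmorphN -mulNr; congr (_ / _); ring. Qed.

Lemma dzw_val_shift e x : dzw_val (dzw_shift e x) = dzw_val x.
Proof.
rewrite /dzw_val /dzw_num /= !rmorphM !rmorphXn exprD.
by field; rewrite !pow2_neq0.
Qed.

Lemma dzw_val_add x y : dzw_val (dzw_add x y) = dzw_val x + dzw_val y.
Proof.
pose e := maxn (dzw_exp x) (dzw_exp y).
rewrite -(dzw_val_shift (e - dzw_exp x) x) -(dzw_val_shift (e - dzw_exp y) y).
rewrite /dzw_val /dzw_num /= !subnKC ?leq_maxl ?leq_maxr // -mulrDl !rmorphD.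
by congr (_ / _); ring.
Qed.

Lemma dzw_val_mul x y : dzw_val (dzw_mul x y) = dzw_val x * dzw_val y.
Proof.
case: x y => k a0 a1 a2 a3 [l b0 b1 b2 b3].
rewrite /dzw_val /dzw_num /= mulf_div -exprD; congr (_ / _).
by rewrite !rmorphB !rmorphD !rmorphM; ring: omega8_pow4.
Qed.

Lemma dzw_val_sum s : dzw_val (dzw_sum s) = \sum_(x <- s) dzw_val x.
Proof.
elim: s => [|x s IH]; first by rewrite big_nil dzw_val_of_nat.
by rewrite big_cons /= dzw_val_add IH.
Qed.

Lemma dzw_val_omega_pow k : dzw_val (dzw_omega_pow k) = w ^+ k.
Proof.
elim: k => [|k IH]; first by rewrite dzw_val_of_nat.
rewrite /dzw_omega_pow iterS dzw_val_mul IH exprS; congr (_ * _).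
by rewrite /dzw_val /dzw_num /= !rmorph0 !rmorph1 !mul0r !mul1r add0r !addr0 divr1.
Qed.

Lemma dzw_val_isqrt2 : dzw_val dzw_isqrt2 = (sqrtC 2)^-1.
Proof.
rewrite /dzw_val /dzw_num /= !rmorph0 !rmorph1 !rmorphN1 !mul0r !mul1r !add0r addr0.
rewrite mulN1r omega8_sub_cube expr1 -{2}(sqrtCK 2) expr2 invfM mulrA.
by rewrite divff ?mul1r // sqrtC_eq0 pnatr_eq0.
Qed.

Lemma dzw_eqbP x y : dzw_eqb x y -> dzw_val x = dzw_val y.
Proof.
case/and4P=> /eqP/(congr1 (fun z => zC z)) e0 /eqP/(congr1 (fun z => zC z)) e1
  /eqP/(congr1 (fun z => zC z)) e2 /eqP/(congr1 (fun z => zC z)) e3.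
move: e0 e1 e2 e3; rewrite !rmorphM !rmorphXn => e0 e1 e2 e3.
apply/eqP; rewrite /dzw_val eqr_div ?pow2_neq0 //; apply/eqP.
by rewrite /dzw_num !mulrDl ![_ * w ^+ _ * _]mulrAC ![_ * w * _]mulrAC e0 e1 e2 e3.
Qed.

End DzwValue.

Definition dzw_clip (r c : nat) (f : nat -> nat -> dzw) (i j : nat) : dzw :=
  if ((i < r) && (j < c))%N then f i j else dzw_of_nat 0.

Definition dzw_table (r c : nat) (f : nat -> nat -> dzw) : seq (seq dzw) :=
  [seq [seq f i j | j <- iota 0 c] | i <- iota 0 r].

Definition dzw_at (t : seq (seq dzw)) (i j : nat) : dzw :=
  nth (dzw_of_nat 0) (nth [::] t i) j.

Lemma dzw_at_table r c f i j : dzw_at (dzw_table r c f) i j = dzw_clip r c f i j.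
Proof.
rewrite /dzw_at /dzw_table /dzw_clip.
have [hi | hi] := ltnP i r; last by rewrite (nth_default [::]) ?nth_nil // size_map size_iota.
rewrite (nth_map 0%N) ?size_iota // nth_iota //=.
have [hj | hj] := ltnP j c; last by rewrite nth_default // size_map size_iota.
by rewrite (nth_map 0%N) ?size_iota // nth_iota.
Qed.

(* The let-bound tables make [vm_compute] evaluate each subdiagram only once. *)
Fixpoint interp_dzw n m (D : diagram n m) : nat -> nat -> dzw :=
  match D with
  | ZSpider n m => dzw_clip (2 ^ m) (2 ^ n) (fun i j => dzw_of_nat
      (((i == 0) && (j == 0)) + ((i == (2 ^ m).-1) && (j == (2 ^ n).-1)))%N)
  | ZPhase k => dzw_clip 2 2 (fun i j =>
      if i == j then if i == 0%N then dzw_of_nat 1 else dzw_omega_pow k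
      else dzw_of_nat 0)
  | Had => dzw_clip 2 2 (fun i j =>
      if odd (i * j) then dzw_opp dzw_isqrt2 else dzw_isqrt2)
  | Swap => dzw_clip 4 4 (fun i j => dzw_of_nat (i == 2 * (j %% 2) + j %/ 2)%N)
  | IdW => dzw_clip 2 2 (fun i j => dzw_of_nat (i == j))
  | Empty => dzw_clip 1 1 (fun i j => dzw_of_nat (i == j))
  | Cap => dzw_clip 4 1 (fun i _ => dzw_of_nat ((i == 0) || (i == 3))%N)
  | Cup => dzw_clip 1 4 (fun _ j => dzw_of_nat ((j == 0) || (j == 3))%N)
  | Comp n k m D1 D2 =>
      let t1 := dzw_table (2 ^ m) (2 ^ k) (interp_dzw D1) in
      let t2 := dzw_table (2 ^ k) (2 ^ n) (interp_dzw D2) in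
      fun i j => dzw_sum [seq dzw_mul (dzw_at t1 i l) (dzw_at t2 l j) | l <- iota 0 (2 ^ k)]
  | Tens n1 m1 n2 m2 D1 D2 =>
      let f1 := interp_dzw D1 in let f2 := interp_dzw D2 in
      fun i j => dzw_mul (f1 (i %/ 2 ^ m2)%N (j %/ 2 ^ n2)%N)
        (f2 (i %% 2 ^ m2)%N (j %% 2 ^ n2)%N)
  end.

Definition interp_dzw_eqb n m (D : diagram n m) (f : nat -> nat -> dzw) : bool :=
  let e := interp_dzw D in
  all (fun i => all (fun j => dzw_eqb (e i j) (f i j)) (iota 0 (2 ^ n))) (iota 0 (2 ^ m)).

Section Semantics.
Variable C : numClosedFieldType.

Lemma entry_kron n1 m1 n2 m2 (A : 'M[C]_(2 ^ m1, 2 ^ n1)) (B : 'M[C]_(2 ^ m2, 2 ^ n2)) i j :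
  entry (kron A B) i j =
  entry A (i %/ 2 ^ m2) (j %/ 2 ^ n2) * entry B (i %% 2 ^ m2) (j %% 2 ^ n2).
Proof.
have m2_gt0 : (0 < 2 ^ m2)%N by rewrite expn_gt0.
have n2_gt0 : (0 < 2 ^ n2)%N by rewrite expn_gt0.
have [/andP[hi hj] | out] := boolP ((i < 2 ^ (m1 + m2)) && (j < 2 ^ (n1 + n2)))%N.
  by rewrite (entry_ord _ (Ordinal hi) (Ordinal hj)) /kron castmxE mxE /= -!entry_ord.
by rewrite entry_out // (entry_out A) ?mul0r // !ltn_divLR // -!expnD.
Qed.

Definition sem n m (D : diagram n m) : nat -> nat -> C := entry (interp C D).

Lemma sem_comp n k m (D1 : diagram k m) (D2 : diagram n k) i j :
  sem (Comp D1 D2) i j = \sum_(0 <= l < 2 ^ k) sem D1 i l * sem D2 l j.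
Proof. exact: entry_mul. Qed.

Lemma sem_tens_split n1 m1 n2 m2 (D1 : diagram n1 m1) (D2 : diagram n2 m2) a b c e :
    (b < 2 ^ m2)%N -> (e < 2 ^ n2)%N ->
  sem (Tens D1 D2) (a * 2 ^ m2 + b) (c * 2 ^ n2 + e) = sem D1 a c * sem D2 b e.
Proof.
move=> hb he; rewrite /sem /= entry_kron !divnMDl ?expn_gt0 // !divn_small // !addn0.
by rewrite !modnMDl !modn_small.
Qed.

Lemma sem_tens_split_l0 m1 n2 m2 (D1 : diagram 0 m1) (D2 : diagram n2 m2) a b j :
    (b < 2 ^ m2)%N -> (j < 2 ^ n2)%N ->
  sem (Tens D1 D2) (a * 2 ^ m2 + b) j = sem D1 a 0 * sem D2 b j.
Proof.
by move=> hb hj; have := sem_tens_split D1 D2 a 0 hb hj; rewrite mul0n [(0 + j)%N]add0n.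
Qed.

Lemma sem_tens_split_r0 n1 m1 n2 (D1 : diagram n1 m1) (D2 : diagram n2 0) i c e :
    (e < 2 ^ n2)%N ->
  sem (Tens D1 D2) i (c * 2 ^ n2 + e) = sem D1 i c * sem D2 0 e.
Proof.
move=> he; have := sem_tens_split D1 D2 i c (isT : 0 < 2 ^ 0)%N he.
by rewrite expn0 muln1 [(i + 0)%N]addn0.
Qed.

Lemma dzw_val_clip n m (D : diagram n m) i j :
    (forall i j, sem D i j = dzw_val C (interp_dzw D i j)) ->
  dzw_val C (dzw_clip (2 ^ m) (2 ^ n) (interp_dzw D) i j) = sem D i j.
Proof.
move=> IH; rewrite /dzw_clip; case: ifP => [_ | /negbT out]; first by rewrite IH.
by rewrite dzw_val_of_nat /sem entry_out.
Qed.

Lemma sem_interp_dzw n m (D : diagram n m) i j : sem D i j = dzw_val C (interp_dzw D i j).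
Proof.
elim: D i j => [n' m' | k | | | | | | | n' k m' D1 IH1 D2 IH2
  | n1 m1 n2 m2 D1 IH1 D2 IH2] i j; rewrite /sem /=.
all: try (apply: entry_mx => [a b <- <- | /negbTE out];
  rewrite /dzw_clip ?ltn_ord ?out ?dzw_val_of_nat //).
- by rewrite natrD.
- case: ifP => _; last by rewrite dzw_val_of_nat.
  by case: ifP => _; rewrite ?dzw_val_of_nat ?dzw_val_omega_pow.
- by rewrite -signr_odd; case: odd; rewrite ?dzw_val_opp dzw_val_isqrt2 ?mulrN1 ?mulr1.
- by rewrite entry_scalar mulr1 /dzw_clip; case: ifP; rewrite dzw_val_of_nat.
- by rewrite entry_scalar mulr1 /dzw_clip; case: ifP; rewrite dzw_val_of_nat.
- rewrite entry_mul dzw_val_sum big_map /index_iota subn0; apply: eq_bigr => l _.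
  by rewrite dzw_val_mul !dzw_at_table !dzw_val_clip.
- by rewrite entry_kron dzw_val_mul -IH1 -IH2.
Qed.

Lemma sem_of_eqb n m (D : diagram n m) f i j : interp_dzw_eqb D f ->
  (i < 2 ^ m)%N -> (j < 2 ^ n)%N -> sem D i j = dzw_val C (f i j).
Proof.
move=> /allP Df hi hj; rewrite sem_interp_dzw; apply: dzw_eqbP.
have i_in : i \in iota 0 (2 ^ m) by rewrite mem_iota.
have j_in : j \in iota 0 (2 ^ n) by rewrite mem_iota.
exact: (allP (Df i i_in) j j_in).
Qed.

Lemma sem_of_eqb_nat n m (D : diagram n m) (f : nat -> nat -> nat) i j :
    interp_dzw_eqb D (fun i j => dzw_of_nat (f i j)) ->
  (i < 2 ^ m)%N -> (j < 2 ^ n)%N -> sem D i j = (f i j)%:R.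
Proof. by move=> Df hi hj; rewrite (sem_of_eqb Df) // dzw_val_of_nat. Qed.

Lemma sem_spider n m i j : (i < 2 ^ m)%N -> (j < 2 ^ n)%N ->
  sem (ZSpider n m) i j =
  (((i == 0) && (j == 0)) + ((i == (2 ^ m).-1) && (j == (2 ^ n).-1)))%N%:R.
Proof. by move=> hi hj; rewrite sem_interp_dzw /= /dzw_clip hi hj dzw_val_of_nat. Qed.

Lemma sem_phase k i j : (i < 2)%N -> (j < 2)%N ->
  sem (ZPhase k) i j = (i == j)%:R * (if i == 0%N then 1 else omega8 C ^+ k).
Proof.
move=> hi hj; rewrite sem_interp_dzw /= /dzw_clip hi hj.
case: (i == j); rewrite ?mul0r ?dzw_val_of_nat // mul1r.
by case: (i == 0%N); rewrite ?dzw_val_of_nat ?dzw_val_omega_pow.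
Qed.

Lemma sem_IdW i j : (i < 2)%N -> (j < 2)%N -> sem IdW i j = (i == j)%:R.
Proof. by move=> hi hj; rewrite sem_interp_dzw /= /dzw_clip hi hj dzw_val_of_nat. Qed.

Lemma sem_Empty : sem Empty 0 0 = 1.
Proof. by rewrite sem_interp_dzw /= dzw_val_of_nat. Qed.

End Semantics.

Notation phase k := (ZPhase (@Ordinal 8 k isT)).

Definition ket_plus : diagram 0 1 := ZSpider 0 1.
Definition bra_plus : diagram 1 0 := ZSpider 1 0.
Definition not_gate : diagram 1 1 := Comp Had (Comp (phase 4) Had).

(* These compute XOR and CNOT up to the factor 1/sqrt 2, so the six CNOTs of
   the standard T-gate circuit for CCZ produce CCZ / 8. *)
Definition xor_gate : diagram 2 1 := Comp Had (Comp (ZSpider 2 1) (Tens Had Had)).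
Definition cnot_down : diagram 2 2 := Comp (Tens IdW xor_gate) (Tens (ZSpider 1 2) IdW).
Definition cnot_up : diagram 2 2 := Comp (Tens xor_gate IdW) (Tens IdW (ZSpider 1 2)).

Definition on_mid (D : diagram 1 1) : diagram 3 3 := Tens IdW (Tens D IdW).
Definition on_top (D : diagram 2 2) : diagram 3 3 := Tens D IdW.
Definition on_bot (D : diagram 2 2) : diagram 3 3 := Tens IdW D.

Fixpoint comp_list n (l : seq (diagram n n)) (D : diagram n n) : diagram n n :=
  if l is D' :: l' then Comp D' (comp_list l' D) else D.

Definition ccz_div8 : diagram 3 3 :=
  comp_list [:: on_bot Swap; on_top cnot_down; on_mid (phase 7); on_top cnot_down;
    on_bot Swap; on_bot cnot_up; on_mid (phase 7); on_top cnot_down; on_mid (phase 1);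
    on_bot cnot_up; on_mid (phase 7); on_top cnot_down]
  (Tens (phase 1) (Tens (phase 1) (phase 1))).

Definition scalar_sqrt2 : diagram 0 0 := Comp bra_plus (Comp Had ket_plus).
Definition scalar_4sqrt2 : diagram 0 0 :=
  Tens (ZSpider 0 0) (Tens (ZSpider 0 0) scalar_sqrt2).
Definition scalar_isqrt2 : diagram 0 0 :=
  Comp Cup (Comp (Tens Had IdW) (Comp (ZSpider 1 2)
    (Comp (phase 3) (Comp Had (Comp (phase 1) ket_plus))))).
Definition scalar_omega7 : diagram 0 0 :=
  Comp Cup (Comp (Tens (Comp Had (phase 2)) IdW) Cap).

Definition and_dagger : diagram 1 2 :=
  Tens scalar_4sqrt2 (Comp (Tens bra_plus (Tens IdW IdW))
    (Comp ccz_div8 (Tens Had (Tens ket_plus ket_plus)))).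

Definition adder : diagram 2 1 :=
  Tens scalar_4sqrt2 (Comp xor_gate (Comp (Tens bra_plus (Tens IdW IdW))
    (Comp ccz_div8 (Tens ket_plus (Tens IdW IdW))))).

Definition flag_and1 : diagram 2 2 :=
  Comp (Tens (ZSpider 2 1) IdW) (Comp (Tens IdW Swap) (Tens and_dagger IdW)).
Definition flag_and0 : diagram 2 2 :=
  Comp (Tens not_gate IdW) (Comp flag_and1 (Tens IdW not_gate)).

(* The transpose of the classical map (a, v) |-> ([a == b] && v, a). *)
Definition flag_and_eq (b : nat) : diagram 2 2 :=
  if b == 1%N then flag_and1 else flag_and0.

Definition bra_one : diagram 1 0 := Tens scalar_isqrt2 (Comp bra_plus (Comp Had not_gate)).

Definition state_isqrt2 : diagram 0 1 :=
  let leaf := Comp Had (Comp (phase 1) ket_plus) in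
  Tens scalar_isqrt2 (Tens scalar_omega7
    (Comp Had (Comp (phase 4) (Comp (ZSpider 2 1) (Tens leaf leaf))))).

Fixpoint wires k : diagram k k :=
  match k with 0 => Empty | k'.+1 => Tens IdW (wires k') end.

Fixpoint ket_plus_n m : diagram 0 m :=
  match m with 0 => Empty | m'.+1 => Tens ket_plus (ket_plus_n m') end.

Fixpoint bra_plus_n n : diagram n 0 :=
  match n with 0 => Empty | n'.+1 => Tens bra_plus (bra_plus_n n') end.

(* The transpose of the classical map x |-> ([x == z], x). *)
Fixpoint flag_eq k (z : nat) : diagram k.+1 k :=
  match k with
  | 0 => bra_one
  | k'.+1 => Comp (Tens IdW (flag_eq k' (z %% 2 ^ k')))
               (Tens (flag_and_eq (z %/ 2 ^ k')) (wires k'))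
  end.

Definition point_phase k z (D : diagram 0 1) : diagram k k :=
  Comp (flag_eq k z) (Tens D (wires k)).

Definition flag_and_eq_table (b i j : nat) : bool :=
  ((i %/ 2 == j %% 2) && (j %/ 2 == (j %% 2 == b) && (i %% 2 == 1)))%N.

Lemma flag_and0_eqb :
  interp_dzw_eqb flag_and0 (fun i j => dzw_of_nat (flag_and_eq_table 0 i j)).
Proof. by vm_compute. Qed.

Lemma flag_and1_eqb :
  interp_dzw_eqb flag_and1 (fun i j => dzw_of_nat (flag_and_eq_table 1 i j)).
Proof. by vm_compute. Qed.

Lemma adder_eqb : interp_dzw_eqb adder
  (fun i j => dzw_of_nat (if i == 0%N then j == 0%N else (j == 1%N) || (j == 2%N))).
Proof. by vm_compute. Qed.

Lemma bra_one_eqb : interp_dzw_eqb bra_one (fun _ j => dzw_of_nat (j == 1%N)).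
Proof. by vm_compute. Qed.

Lemma state_isqrt2_eqb : interp_dzw_eqb state_isqrt2
  (fun i _ => if i == 0%N then dzw_of_nat 1 else dzw_isqrt2).
Proof. by vm_compute. Qed.

Section Completeness.
Variable C : numClosedFieldType.
Local Notation sem := (sem C).

Lemma sem_flag_and_eq b a v s x :
    (b < 2)%N -> (a < 2)%N -> (v < 2)%N -> (s < 2)%N -> (x < 2)%N ->
  sem (flag_and_eq b) (a * 2 + v) (s * 2 + x) =
  ((a == x) && (s == (x == b) && (v == 1%N)))%:R.
Proof.
move=> hb ha hv hs hx.
have hi : (a * 2 + v < 2 ^ 2)%N by exact: (@index_pair_lt 1 1).
have hj : (s * 2 + x < 2 ^ 2)%N by exact: (@index_pair_lt 1 1).
have -> : sem (flag_and_eq b) (a * 2 + v) (s * 2 + x) =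
    (flag_and_eq_table b (a * 2 + v) (s * 2 + x))%:R.
  case: b hb => [|[|//]] _.
    by rewrite -[flag_and_eq 0]/flag_and0 (sem_of_eqb_nat _ flag_and0_eqb).
  by rewrite -[flag_and_eq 1]/flag_and1 (sem_of_eqb_nat _ flag_and1_eqb).
by rewrite /flag_and_eq_table !divnMDl // !modnMDl !divn_small // !modn_small // !addn0.
Qed.

Lemma sem_adder i j : (i < 2)%N -> (j < 4)%N ->
  sem adder i j = (if i == 0%N then j == 0%N else (j == 1%N) || (j == 2%N))%:R.
Proof. by move=> hi hj; rewrite (sem_of_eqb_nat _ adder_eqb). Qed.

Lemma sem_bra_one j : (j < 2)%N -> sem bra_one 0 j = (j == 1%N)%:R.
Proof. by move=> hj; rewrite (sem_of_eqb_nat _ bra_one_eqb). Qed.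

Lemma sem_wires k i j : (i < 2 ^ k)%N -> (j < 2 ^ k)%N -> sem (wires k) i j = (i == j)%:R.
Proof.
elim: k i j => [|k IH] i j.
  by rewrite expn0 !ltnS !leqn0 => /eqP-> /eqP->; rewrite sem_Empty.
case/index_splitP => a r ha hr /index_splitP[c e hc he].
rewrite (sem_tens_split C IdW (wires k) a c) // sem_IdW // IH // eq_addl_mul // xpair_eqE.
by rewrite -natrM mulnb.
Qed.

Lemma sem_ket_plus_n m y : (y < 2 ^ m)%N -> sem (ket_plus_n m) y 0 = 1.
Proof.
elim: m y => [|m IH] y; first by rewrite expn0 ltnS leqn0 => /eqP->; rewrite sem_Empty.
case/index_splitP => a b ha hb.
rewrite (sem_tens_split_l0 C ket_plus (ket_plus_n m) a) // IH // mulr1 sem_spider //.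
by case: a ha => [|[|//]].
Qed.

Lemma sem_bra_plus_n n x : (x < 2 ^ n)%N -> sem (bra_plus_n n) 0 x = 1.
Proof.
elim: n x => [|n IH] x; first by rewrite expn0 ltnS leqn0 => /eqP->; rewrite sem_Empty.
case/index_splitP => a b ha hb.
rewrite (sem_tens_split_r0 C bra_plus (bra_plus_n n) 0 a) // IH // mulr1 sem_spider //.
by case: a ha => [|[|//]].
Qed.

Lemma sem_flag_eq k z x s y :
    (z < 2 ^ k)%N -> (x < 2 ^ k)%N -> (y < 2 ^ k)%N -> (s < 2)%N ->
  sem (flag_eq k z) x (s * 2 ^ k + y) = ((x == y) && (s == (x == z)))%:R.
Proof.
elim: k z x y s => [|k IH] z x y s.
  rewrite expn0 !ltnS !leqn0 => /eqP-> /eqP-> /eqP-> hs.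
  by rewrite muln1 addn0 sem_bra_one.
case/index_splitP=> zb zr hzb hzr; case/index_splitP=> xa xr hxa hxr.
case/index_splitP=> ya yr hya hyr hs.
rewrite [flag_eq _ _]/= modnMDl divnMDl ?expn_gt0 // modn_small // divn_small // addn0.
have summand a v r : (a < 2)%N -> (v < 2)%N -> (r < 2 ^ k)%N ->
    sem (Tens IdW (flag_eq k zr)) (xa * 2 ^ k + xr) (a * 2 ^ k.+1 + (v * 2 ^ k + r)) *
    sem (Tens (flag_and_eq zb) (wires k)) (a * 2 ^ k.+1 + (v * 2 ^ k + r))
      (s * 2 ^ k.+1 + (ya * 2 ^ k + yr)) =
    (r == xr)%:R * ((v == (xr == zr))%:R * ((a == xa)%:R *
      ((a == ya) && (s == (ya == zb) && (v == 1%N)) && (xr == yr))%:R)).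
  move=> ha hv hr.
  rewrite (sem_tens_split C IdW) ?(@index_pair_lt 1) // sem_IdW // IH //.
  rewrite !index_assoc (sem_tens_split C (flag_and_eq zb)) // sem_flag_and_eq // sem_wires //.
  rewrite -!natrM !mulnb [xa == a]eq_sym [xr == r]eq_sym; congr (_%:R).
  case: (r =P xr) => [-> | _]; rewrite /= ?andFb ?andbF //.
  by rewrite -andbA andbCA.
rewrite sem_comp (sum_pow2_split _ 1 k.+1).
under eq_big_nat => a /andP[_ ha].
  rewrite (sum_pow2_split _ 1 k).
  under eq_big_nat => v /andP[_ hv].
    under eq_big_nat => r /andP[_ hr] do rewrite summand //.
    rewrite sum_nat_delta //.
    over.
  rewrite sum_nat_delta; last exact: leq_b1.
  over.
rewrite sum_nat_delta // !eq_addl_mul // !xpair_eqE; congr (_%:R).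
case: (xa =P ya) => [-> | _]; rewrite /= ?andbF ?andFb //.
by rewrite andbC; case: (xr == zr).
Qed.

Lemma sem_comp_diag k n (D : diagram k k) (E : diagram n k) (g : nat -> C) x y :
    (forall x x', (x < 2 ^ k)%N -> (x' < 2 ^ k)%N -> sem D x x' = (x == x')%:R * g x) ->
    (x < 2 ^ k)%N ->
  sem (Comp D E) x y = g x * sem E x y.
Proof.
move=> hD hx; rewrite sem_comp.
under eq_big_nat => l /andP[_ hl] do rewrite hD // eq_sym -mulrA.
by rewrite sum_nat_delta.
Qed.

Definition state_of (l : C) (D : diagram 0 1) : Prop := sem D 0 0 = 1 /\ sem D 1 0 = l.

Lemma state_of_one : state_of 1 ket_plus.
Proof. by rewrite /state_of !sem_spider. Qed.

Lemma state_of_isqrt2 : state_of (sqrtC 2)^-1 state_isqrt2.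
Proof.
by rewrite /state_of !(sem_of_eqb _ state_isqrt2_eqb) // dzw_val_of_nat dzw_val_isqrt2.
Qed.

Lemma state_of_phase (k : 'I_8) l D :
  state_of l D -> state_of (omega8 C ^+ k * l) (Comp (ZPhase k) D).
Proof.
case=> D0 D1; rewrite /state_of !sem_comp !sum_nat2 !sem_phase //= D0 D1.
by rewrite !mul1r !mul0r !addr0 add0r.
Qed.

Lemma sem_comp_pair (G : diagram 2 1) (Dx Dy : diagram 0 1) i :
  sem (Comp G (Tens Dx Dy)) i 0 =
  \sum_(0 <= a < 2) \sum_(0 <= b < 2) sem G i (a * 2 + b) * (sem Dx a 0 * sem Dy b 0).
Proof.
rewrite sem_comp (sum_pow2_split _ 1 1); apply: eq_big_nat => a _.
by apply: eq_big_nat => b /andP[_ hb]; rewrite (sem_tens_split_l0 C Dx Dy a).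
Qed.

Lemma state_of_add x y Dx Dy : state_of x Dx -> state_of y Dy ->
  state_of (x + y) (Comp adder (Tens Dx Dy)).
Proof.
case=> x0 x1 [y0 y1]; rewrite /state_of !sem_comp_pair !sum_nat2 !sem_adder //=.
by rewrite x0 x1 y0 y1; split; ring.
Qed.

Lemma state_of_mul x y Dx Dy : state_of x Dx -> state_of y Dy ->
  state_of (x * y) (Comp (ZSpider 2 1) (Tens Dx Dy)).
Proof.
case=> x0 x1 [y0 y1]; rewrite /state_of !sem_comp_pair !sum_nat2 !sem_spider //=.
by rewrite x0 x1 y0 y1; split; ring.
Qed.

Lemma state_of_in_Zi_isqrt2 l : in_Zi_isqrt2 l -> exists D, state_of l D.
Proof.
elim=> [| | | x y _ [Dx hx] _ [Dy hy] | x _ [Dx hx] | x y _ [Dx hx] _ [Dy hy]].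
- by exists ket_plus; exact: state_of_one.
- exists (Comp (phase 2) ket_plus).
  by rewrite -[X in state_of X]mulr1 -omega8_sqr; apply: state_of_phase state_of_one.
- by exists state_isqrt2; exact: state_of_isqrt2.
- by exists (Comp adder (Tens Dx Dy)); exact: state_of_add.
- exists (Comp (phase 4) Dx).
  by rewrite -mulN1r -omega8_pow4; exact: state_of_phase.
- by exists (Comp (ZSpider 2 1) (Tens Dx Dy)); exact: state_of_mul.
Qed.

Lemma sem_point_phase k z l D x y : state_of l D ->
    (z < 2 ^ k)%N -> (x < 2 ^ k)%N -> (y < 2 ^ k)%N ->
  sem (point_phase k z D) x y = (x == y)%:R * (if x == z then l else 1).
Proof.
case=> D0 D1 hz hx hy; rewrite sem_comp (sum_pow2_split _ 1 k).
under eq_big_nat => s /andP[_ hs].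
  under eq_big_nat => q /andP[_ hq] do rewrite sem_flag_eq //
    (sem_tens_split_l0 C D (wires k)) // sem_wires // -mulnb natrM [x == q]eq_sym -mulrA.
  rewrite sum_nat_delta //.
  over.
rewrite sum_nat2 D0 D1.
by case: (x == z); rewrite /= ?mul0r ?mul1r ?add0r ?addr0 ?mulr1 // mulrC.
Qed.

Lemma exists_diag k (f : nat -> C) :
    (forall x, (x < 2 ^ k)%N -> exists D, state_of (f x) D) ->
  exists D : diagram k k, forall x y, (x < 2 ^ k)%N -> (y < 2 ^ k)%N ->
    sem D x y = (x == y)%:R * f x.
Proof.
move=> hf; suff diag_upto s : (s <= 2 ^ k)%N -> exists D : diagram k k,
    forall x y, (x < 2 ^ k)%N -> (y < 2 ^ k)%N ->
    sem D x y = (x == y)%:R * (if (x < s)%N then f x else 1).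
  by have [D hD] := diag_upto _ (leqnn _); exists D => x y hx hy; rewrite hD // hx.
elim: s => [_ | s IH hs].
  by exists (wires k) => x y hx hy; rewrite sem_wires // mulr1.
have [D hD] := IH (ltnW hs); have [Ds hDs] := hf s hs.
exists (Comp (point_phase k s Ds) D) => x y hx hy.
rewrite (@sem_comp_diag _ _ _ _ (fun x => if x == s then f s else 1)) //; last first.
  by move=> x' x'' hx' hx''; rewrite (sem_point_phase hDs).
rewrite hD // ltnS; case: (x =P s) => [-> | /eqP x_neq_s].
  by rewrite ltnn leqnn mulr1 mulrC.
by rewrite mul1r [(x <= s)%N]leq_eqVlt (negbTE x_neq_s).
Qed.

Lemma exists_diagram_of_entries m n (F : nat -> nat -> C) :
    (forall y x, (y < 2 ^ m)%N -> (x < 2 ^ n)%N -> exists D, state_of (F y x) D) ->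
  exists D : diagram n m, forall y x, (y < 2 ^ m)%N -> (x < 2 ^ n)%N -> sem D y x = F y x.
Proof.
(* The construction naturally has codomain [m + 0], which is not convertible to [m]. *)
move=> hF; suff [D hD] : exists D : diagram n (m + 0),
    forall y x, (y < 2 ^ (m + 0))%N -> (x < 2 ^ n)%N -> sem D y x = F y x.
  by move: D hD; rewrite addn0 => D hD; exists D.
pose f l := F (l %/ 2 ^ n)%N (l %% 2 ^ n)%N.
have [Df hDf] : exists D : diagram (m + n) (m + n), forall x y, (x < 2 ^ (m + n))%N ->
    (y < 2 ^ (m + n))%N -> sem D x y = (x == y)%:R * f x.
  apply: exists_diag => l hl; apply: hF; last by rewrite ltn_mod expn_gt0.
  by rewrite ltn_divLR ?expn_gt0 // -expnD.
exists (Comp (Tens (wires m) (bra_plus_n n)) (Comp Df (Tens (ket_plus_n m) (wires n)))).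
move=> y x hy hx; rewrite addn0 in hy; rewrite sem_comp (sum_pow2_split _ m n).
under eq_big_nat => a /andP[_ ha].
  under eq_big_nat => b /andP[_ hb] do
    rewrite (sem_tens_split_r0 C (wires m) (bra_plus_n n)) // sem_wires //
      sem_bra_plus_n // (sem_comp_diag _ _ hDf) ?index_pair_lt //
      (sem_tens_split_l0 C (ket_plus_n m) (wires n)) // sem_ket_plus_n // sem_wires //
      /f divnMDl ?expn_gt0 // divn_small // addn0 modnMDl modn_small //
      mulr1 mul1r [F _ _ * _]mulrC mulrCA.
  rewrite sum_nat_delta //.
  over.
by under eq_big_nat => a _ do rewrite eq_sym; rewrite sum_nat_delta.
Qed.

End Completeness.

Section Soundness.
Variable C : numClosedFieldType.
Local Notation inR := (@in_Zi_isqrt2 C).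

Lemma in_Zi_isqrt2_0 : inR 0.
Proof.
by rewrite -(subrr (1 : C)); apply: inR_add; [exact: inR_one | exact/inR_opp/inR_one].
Qed.

Lemma in_Zi_isqrt2_natmul x k : inR x -> inR (x *+ k).
Proof.
move=> Rx; elim: k => [|k IH]; first exact: in_Zi_isqrt2_0.
by rewrite mulrS; apply: inR_add.
Qed.

Lemma in_Zi_isqrt2_exp x k : inR x -> inR (x ^+ k).
Proof.
move=> Rx; elim: k => [|k IH]; first exact: inR_one.
by rewrite exprS; apply: inR_mul.
Qed.

Lemma in_Zi_isqrt2_interp n m (D : diagram n m) i j : inR (interp C D i j).
Proof.
have Rnat k : inR k%:R by apply/in_Zi_isqrt2_natmul/inR_one.
have Romega : inR (omega8 C).
  by apply: inR_mul; [apply: inR_add; [exact: inR_one | exact: inR_i] | exact: inR_isqrt2].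
elim: D i j => [n' m' | k | | | | | | | n' k m' D1 IH1 D2 IH2
  | n1 m1 n2 m2 D1 IH1 D2 IH2] i j /=; rewrite ?mxE; try exact: Rnat.
- exact: inR_add.
- case: ifP => _; last exact: in_Zi_isqrt2_0.
  by case: ifP => _; [exact: inR_one | exact: in_Zi_isqrt2_exp].
- by apply: inR_mul; [exact: inR_isqrt2 | exact/in_Zi_isqrt2_exp/inR_opp/inR_one].
- apply: (big_ind inR); [exact: in_Zi_isqrt2_0 | exact: inR_add |].
  by move=> l _; apply: inR_mul.
- by rewrite /kron castmxE mxE; apply: inR_mul.
Qed.

End Soundness.

Theorem mainTheorem1 (C : numClosedFieldType) (m n : nat)
    (M : 'M[C]_(2 ^ m, 2 ^ n)) :
  (exists D : diagram n m, interp C D = M) <->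
  (forall i j, in_Zi_isqrt2 (M i j)).
Proof.
split=> [[D <-] | RM]; first exact: in_Zi_isqrt2_interp.
have RM_states y x : (y < 2 ^ m)%N -> (x < 2 ^ n)%N -> exists D, state_of (entry M y x) D.
  move=> hy hx; apply: state_of_in_Zi_isqrt2.
  by rewrite (entry_ord M (Ordinal hy) (Ordinal hx)).
have [D hD] := exists_diagram_of_entries RM_states.
exists D; apply/matrixP => i j.
by rewrite -[RHS]entry_ord -hD // /sem entry_ord.
Qed.
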